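(* Let $X\subset\mathbb{P}^1_x\times\mathbb{P}^1_y\times\mathbb{P}^1_z$ be a smooth surface of tri-degree $(2,2,2)$ and suppose none of $\pi_x,\pi_y,\pi_z$ contracts a curve. Then the group generated by $\iota_x^*|_M,\iota_y^*|_M,\iota_z^*|_M$ is the free product $\langle\iota_x^*|_M\rangle*\langle\iota_y^*|_M\rangle*\langle\iota_z^*|_M\rangle\cong(\mathbb{Z}/2)*(\mathbb{Z}/2)*(\mathbb{Z}/2)$, and hence $\langle\iota_x,\iota_y,\iota_z\rangle=\langle\iota_x\rangle*\langle\iota_y\rangle*\langle\iota_z\rangle\cong(\mathbb{Z}/2)*(\mathbb{Z}/2)*(\mathbb{Z}/2)$. In particular $\iota_x\circ\iota_y$ and $\iota_z\circ\iota_x\circ\iota_y\circ\iota_z$ generate a free group of rank $2$.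
   Context: $\pi_x,\pi_y,\pi_z$ are the restrictions to $X$ of the projections to $\mathbb{P}^1_y\times\mathbb{P}^1_z$, $\mathbb{P}^1_x\times\mathbb{P}^1_z$, $\mathbb{P}^1_x\times\mathbb{P}^1_y$; they are double covers with covering involutions $\iota_x,\iota_y,\iota_z$. $M=\mathbb{Z}h_x\oplus\mathbb{Z}h_y\oplus\mathbb{Z}h_z\subset\mathrm{NS}(X)$, where $h_x,h_y,h_z$ are fiber classes of the projections of $X$ to $\mathbb{P}^1_x,\mathbb{P}^1_y,\mathbb{P}^1_z$; under the hypothesis, $M$ is invariant under $\iota_x^*,\iota_y^*,\iota_z^*$, whose matrices in the basis $h_x,h_y,h_z$ are $\begin{pmatrix}-1&0&0\\2&1&0\\2&0&1\end{pmatrix}$, $\begin{pmatrix}1&2&0\\0&-1&0\\0&2&1\end{pmatrix}$, $\begin{pmatrix}1&0&2\\0&1&2\\0&0&-1\end{pmatrix}$. *)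

From HB Require Import structures.
From mathcomp Require Import all_boot all_order all_algebra.
Set Implicit Arguments. Unset Strict Implicit. Unset Printing Implicit Defensive.
Import Order.TTheory GRing.Theory Num.Theory.
Local Open Scope ring_scope.

Definition mx3 (r : seq (seq int)) : 'M[int]_3 :=
  \matrix_(i < 3, j < 3) nth 0 (nth [::] r i) j.

(* Matrices of iota_x^*, iota_y^*, iota_z^* on M in the basis h_x, h_y, h_z
   (column j = image of the j-th basis vector). *)
Definition Ix : 'M[int]_3 := mx3 [:: [:: -1; 0; 0]; [:: 2; 1; 0]; [:: 2; 0; 1]].
Definition Iy : 'M[int]_3 := mx3 [:: [:: 1; 2; 0]; [:: 0; -1; 0]; [:: 0; 2; 1]].
Definition Iz : 'M[int]_3 := mx3 [:: [:: 1; 0; 2]; [:: 0; 1; 2]; [:: 0; 0; -1]].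

Definition weval (G L : Type) (mul : G -> G -> G) (one : G) (g : L -> G)
  (w : seq L) : G := foldr (fun l acc => mul (g l) acc) one w.

Definition gen3 (G : Type) (a b c : G) (i : 'I_3) : G :=
  if val i == 0%N then a else if val i == 1%N then b else c.

(* Reduced words in the free product of three copies of Z/2:
   nonempty, no two consecutive equal letters. *)
Definition reduced3 (w : seq 'I_3) : bool :=
  (w != [::]) && sorted (fun a b => a != b) w.

Definition gen2 (G : Type) (u ui v vi : G) (l : bool * bool) : G :=
  match l with
  | (false, false) => u | (false, true) => ui
  | (true, false) => v | (true, true) => vi
  end.

(* Freely reduced nonempty words: no letter followed by its inverse. *)
Definition reduced_free2 (w : seq (bool * bool)) : bool :=
  (w != [::]) && sorted (fun a b => ~~ ((a.1 == b.1) && (a.2 != b.2))) w.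

From mathcomp Require Import all_boot all_algebra zify.
Set Implicit Arguments. Unset Strict Implicit. Unset Printing Implicit Defensive.
Local Open Scope ring_scope.

(* Ping-pong on linear forms.  Let the matrices act on row vectors (a, b, c)
   with positive entries.  A reflection fixes two coordinates and replaces the
   third one, say a, by 2b + 2c - a; hence if the largest coordinate is not
   the one being replaced, afterwards the replaced one is the largest.  Along a
   reduced word the position of the largest coordinate therefore follows the
   last letter, and the balanced vector (1, 1, 1), which has no largest
   coordinate, is never recovered.  For the words in
   u = iota_x iota_y and v = iota_z u iota_z the same bookkeeping works letter
   by letter, with v remembering the state before its final iota_z so that
   the cancellation in v v = iota_z u u iota_z is harmless.  The group
   statements follow because pulling back turns any relation in the group
   into a relation among the matrices, with the word reversed. *)

Lemma weval_cat (G L : Type) (mul : G -> G -> G) (one : G) (g : L -> G) :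
  associative mul -> left_id one mul ->
  forall w1 w2, weval mul one g (w1 ++ w2) = mul (weval mul one g w1) (weval mul one g w2).
Proof.
by move=> mulA mul1 w1 w2; elim: w1 => [|l w1 IH] /=; rewrite ?mul1 // IH mulA.
Qed.

Lemma weval_antimorphism (G H L : Type) (mul : G -> G -> G) (one : G)
    (mulH : H -> H -> H) (oneH : H) (f : G -> H) (g : L -> G) (M : L -> H) :
  associative mulH -> left_id oneH mulH -> right_id oneH mulH ->
  (forall x y, f (mul x y) = mulH (f y) (f x)) -> f one = oneH ->
  (forall l, f (g l) = M l) ->
  forall w, f (weval mul one g w) = weval mulH oneH M (rev w).
Proof.
move=> mulHA mulH1 mul1H fM f1 fg; elim=> [|l w IH] //=.
by rewrite fM IH fg rev_cons -cats1 weval_cat //= mul1H.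
Qed.

Lemma mulmx_weval (R : pzRingType) (m n : nat) (L T : Type) (rep : T -> 'M[R]_(m, n))
    (M : L -> 'M[R]_n) (F : L -> T -> T) :
  (forall l t, rep t *m M l = rep (F l t)) ->
  forall w t, rep t *m weval mulmx 1%:M M w = rep (foldl (fun t l => F l t) t w).
Proof.
move=> repM; elim=> [|l w IH] t /=; first by rewrite mulmx1.
by rewrite mulmxA repM IH.
Qed.

Section PingPong.
Variables (L T : Type) (adj : rel L) (act : L -> T -> T) (state : L -> T -> Prop).
Variable t0 : T.
Hypothesis state_act : forall l l' t, adj l l' -> state l t -> state l' (act l' t).
Hypothesis state_start : forall l, state l (act l t0).
Hypothesis start_stateless : forall l, ~ state l t0.

Lemma state_foldl w : forall l t, path adj l w -> state l t ->
  state (last l w) (foldl (fun t l => act l t) t w).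
Proof.
elim: w => [//|l' w IH] l t /= /andP [adj_ll' path_w] st.
exact: IH path_w (state_act adj_ll' st).
Qed.

Lemma ping_pong l w : path adj l w -> foldl (fun t l => act l t) t0 (l :: w) <> t0.
Proof.
move=> path_w /= back.
apply: (start_stateless (l := last l w)); rewrite -back; exact: state_foldl.
Qed.

End PingPong.

Definition T3 := (int * int * int)%type.

Definition lx : 'I_3 := @Ordinal 3 0 isT.
Definition ly : 'I_3 := @Ordinal 3 1 isT.
Definition lz : 'I_3 := @Ordinal 3 2 isT.

Definition rowv (t : T3) : 'rV[int]_3 :=
  \row_(k < 3) (if val k == 0%N then t.1.1 else if val k == 1%N then t.1.2 else t.2).

Lemma rowv_inj : injective rowv.
Proof.
move=> [[a b] c] [[a' b'] c'] /rowP eq_ab.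
have := eq_ab lx; have := eq_ab ly; have := eq_ab lz.
by rewrite !mxE /= => -> -> ->.
Qed.

Definition coact (i : 'I_3) (t : T3) : T3 :=
  let: (a, b, c) := t in
  if val i == 0%N then (2 * b + 2 * c - a, b, c)
  else if val i == 1%N then (a, 2 * a + 2 * c - b, c)
  else (a, b, 2 * a + 2 * b - c).

Lemma rowv_mulmx_gen3 i t : rowv t *m gen3 Ix Iy Iz i = rowv (coact i t).
Proof.
case: t => [[a b] c]; apply/rowP => k.
rewrite !mxE !big_ord_recl big_ord0 /gen3.
case: i => [[|[|[|i]]] ?] //=; rewrite /Ix /Iy /Iz /mx3 !mxE /=;
  case: k => [[|[|[|k]]] ?] //=; lia.
Qed.

Lemma coactK i : involutive (coact i).
Proof. by case=> [[a b] c]; case: i => [[|[|[|i]]] ?] //=; congr (_, _, _); lia. Qed.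

Lemma gen3_mulmx_self i : gen3 Ix Iy Iz i *m gen3 Ix Iy Iz i = 1%:M.
Proof.
apply/matrixP => j k; rewrite !mxE !big_ord_recl big_ord0 /gen3.
case: i => [[|[|[|i]]] ?] //=; rewrite /Ix /Iy /Iz /mx3 !mxE /=;
  case: j => [[|[|[|j]]] ?] //=; case: k => [[|[|[|k]]] ?] //=; rewrite !mxE /=; lia.
Qed.

Definition dominant (i : 'I_3) (t : T3) : Prop :=
  let: (a, b, c) := t in 0 < a /\ 0 < b /\ 0 < c /\
  (if val i == 0%N then b < a /\ c < a
   else if val i == 1%N then a < b /\ c < b else a < c /\ b < c).

Lemma coact_dominant i j t : i != j -> dominant i t -> dominant j (coact j t).
Proof.
case: t => [[a b] c].
by case: i => [[|[|[|i]]] ?] //; case: j => [[|[|[|j]]] ?] //= _; lia.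
Qed.

Lemma dominant_coact_balanced i : dominant i (coact i (1, 1, 1)).
Proof. by case: i => [[|[|[|i]]] ?] //=; lia. Qed.

Lemma balanced_not_dominant i : ~ dominant i (1, 1, 1).
Proof. by case: i => [[|[|[|i]]] ?] //=; lia. Qed.

Lemma Ixyz_free_product w : reduced3 w ->
  weval (@mulmx int 3 3 3) 1%:M (gen3 Ix Iy Iz) w <> 1%:M.
Proof.
case: w => [//|l w] /andP [_ path_w] w1.
have := mulmx_weval rowv_mulmx_gen3 (l :: w) (1, 1, 1); rewrite w1 mulmx1 => /rowv_inj/esym.
exact: (ping_pong coact_dominant dominant_coact_balanced balanced_not_dominant path_w).
Qed.

(* Pulling back reverses products, so on row vectors u = iota_x iota_y acts by
   [coact ly] and then [coact lx], and u^-1 the other way round. *)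
Definition u_first (b : bool) : 'I_3 := if b then lx else ly.
Definition u_last (b : bool) : 'I_3 := u_first (~~ b).

Definition coact_u (b : bool) (t : T3) : T3 := coact (u_last b) (coact (u_first b) t).

Definition coact2 (l : bool * bool) (t : T3) : T3 :=
  if l.1 then coact lz (coact_u l.2 (coact lz t)) else coact_u l.2 t.

Definition dominant2 (l : bool * bool) (t : T3) : Prop :=
  dominant (u_last l.2) (if l.1 then coact lz t else t).

Definition adj2 (l l' : bool * bool) : bool := ~~ ((l.1 == l'.1) && (l.2 != l'.2)).

Lemma u_first_neq_last b : u_first b != u_last b. Proof. by case: b. Qed.
Lemma u_first_neq_z b : u_first b != lz. Proof. by case: b. Qed.
Lemma u_last_neq_z b : u_last b != lz. Proof. by case: b. Qed.

Lemma coact_u_dominant i b t :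
  i != u_first b -> dominant i t -> dominant (u_last b) (coact_u b t).
Proof.
move=> i_first dom_t; apply: coact_dominant (u_first_neq_last b) _.
exact: coact_dominant dom_t.
Qed.

Lemma coact2_dominant2 l l' t : adj2 l l' -> dominant2 l t -> dominant2 l' (coact2 l' t).
Proof.
have dom_z i t' : i != lz -> dominant i t' -> dominant lz (coact lz t') by exact: coact_dominant.
case: l l' => [[] b] [[] b']; rewrite /adj2 /dominant2 /coact2 /= ?coactK.
- rewrite negbK => /eqP <- dom_t.
  by apply: coact_u_dominant dom_t; rewrite eq_sym u_first_neq_last.
- move=> _ /(dom_z _ _ (u_last_neq_z b)); rewrite coactK => dom_t.
  by apply: coact_u_dominant dom_t; rewrite eq_sym u_first_neq_z.
- move=> _ /(dom_z _ _ (u_last_neq_z b)) dom_t.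
  by apply: coact_u_dominant dom_t; rewrite eq_sym u_first_neq_z.
- rewrite negbK => /eqP <- dom_t.
  by apply: coact_u_dominant dom_t; rewrite eq_sym u_first_neq_last.
Qed.

Lemma dominant2_coact2_balanced l : dominant2 l (coact2 l (1, 1, 1)).
Proof. by case: l => [[] []]; rewrite /dominant2 /coact2 /= ?coactK /=; lia. Qed.

Lemma balanced_not_dominant2 l : ~ dominant2 l (1, 1, 1).
Proof. by case: l => [[] []]; rewrite /dominant2 /=; lia. Qed.

Lemma rowv_mulmx_gen2 l t :
  rowv t *m gen2 (Iy *m Ix) (Ix *m Iy) (Iz *m Iy *m Ix *m Iz) (Iz *m Ix *m Iy *m Iz) l =
  rowv (coact2 l t).
Proof.
have rowvX s : rowv s *m Ix = rowv (coact lx s) := rowv_mulmx_gen3 lx s.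
have rowvY s : rowv s *m Iy = rowv (coact ly s) := rowv_mulmx_gen3 ly s.
have rowvZ s : rowv s *m Iz = rowv (coact lz s) := rowv_mulmx_gen3 lz s.
by case: l => [[] []];
  rewrite /= !mulmxA; do ![rewrite rowvX | rewrite rowvY | rewrite rowvZ].
Qed.

Lemma Iuv_free_group w : reduced_free2 w ->
  weval (@mulmx int 3 3 3) 1%:M
    (gen2 (Iy *m Ix) (Ix *m Iy) (Iz *m Iy *m Ix *m Iz) (Iz *m Ix *m Iy *m Iz)) w <> 1%:M.
Proof.
case: w => [//|l w] /andP [_ path_w] w1.
have := mulmx_weval rowv_mulmx_gen2 (l :: w) (1, 1, 1); rewrite w1 mulmx1 => /rowv_inj/esym.
exact: (ping_pong coact2_dominant2 dominant2_coact2_balanced balanced_not_dominant2 path_w).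
Qed.

Lemma sorted_rev_sym (T : Type) (e : rel T) : symmetric e ->
  forall s, sorted e (rev s) = sorted e s.
Proof. by move=> e_sym s; rewrite rev_sorted; apply: eq_sorted => x y; rewrite e_sym. Qed.

Lemma reduced3_rev w : reduced3 (rev w) = reduced3 w.
Proof.
rewrite /reduced3 -!size_eq0 size_rev sorted_rev_sym // => i j.
by rewrite eq_sym.
Qed.

Lemma reduced_free2_rev w : reduced_free2 (rev w) = reduced_free2 w.
Proof.
rewrite /reduced_free2 -!size_eq0 size_rev sorted_rev_sym // => l l'.
by rewrite eq_sym [l'.2 == _]eq_sym.
Qed.

Theorem proposition3p5 :
  (Ix *m Ix = 1%:M /\ Iy *m Iy = 1%:M /\ Iz *m Iz = 1%:M /\
   forall w : seq 'I_3, reduced3 w ->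
     weval (@mulmx int 3 3 3) 1%:M (gen3 Ix Iy Iz) w <> 1%:M) /\
  (forall (G : Type) (mul : G -> G -> G) (one : G) (f : G -> 'M[int]_3)
          (ix iy iz : G),
     associative mul -> left_id one mul -> right_id one mul ->
     (forall g h, f (mul g h) = f h *m f g) -> f one = 1%:M ->
     mul ix ix = one -> mul iy iy = one -> mul iz iz = one ->
     f ix = Ix -> f iy = Iy -> f iz = Iz ->
     (forall w : seq 'I_3, reduced3 w -> weval mul one (gen3 ix iy iz) w <> one) /\
     (forall w : seq (bool * bool), reduced_free2 w ->
        weval mul one
          (gen2 (mul ix iy) (mul iy ix)
                (mul iz (mul ix (mul iy iz))) (mul iz (mul iy (mul ix iz)))) w
        <> one)).
Proof.
split.
  by split; [|split; [|split]]; [exact: (gen3_mulmx_self lx) | exact: (gen3_mulmx_self ly)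
                               | exact: (gen3_mulmx_self lz) | exact: Ixyz_free_product].
move=> G mul one f ix iy iz _ _ _ fM f1 _ _ _ fx fy fz.
have pullback (L : Type) (g : L -> G) (M : L -> 'M[int]_3) w :
    (forall l, f (g l) = M l) -> weval mul one g w = one ->
    weval (@mulmx int 3 3 3) 1%:M M (rev w) = 1%:M.
  move=> fg /(congr1 f); rewrite f1.
  by rewrite (weval_antimorphism (@mulmxA _ _ _ _ _) (@mul1mx _ _ _) (@mulmx1 _ _ _) fM f1 fg).
split=> w w_red /pullback w1.
- apply: (Ixyz_free_product (w := rev w)); first by rewrite reduced3_rev.
  by apply: w1 => i; rewrite /gen3; case: ifP => _; [|case: ifP].
- apply: (Iuv_free_group (w := rev w)); first by rewrite reduced_free2_rev.
  by apply: w1 => -[[] []]; rewrite /= !fM ?fx ?fy ?fz ?mulmxA.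
Qed.
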